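(* Let $1\le r<\infty$, $d\in\mathbb{N}$, $\varepsilon>0$. Let $a=\lceil(8/\varepsilon+3)^r\rceil$ and $M=\{k_j\}_{j=1}^\infty$ with $k_j=a^{j-1}$. Let $\bar m,\bar n\in[M]^d$ with $m_1<n_1<\dots<m_d<n_d$, let $k>n_d$, let $u=((a_s)_{s=1}^d,(b_s)_{s=1}^d,c)\in S_{\ell_\infty^{2d+1}}$, and let $F=(F_i)_{i=1}^k\colon S_{\ell_\infty^k}\to S_{\ell_r^k}$ be a step preserving function with $F_i(x(\bar m,u,k))=0$ for all $i\in(m_d,k]$. Then \[\|F(x(\bar m,u,k))-F(x(\bar n,u,k))\|_r>1-\varepsilon.\]
   Context: $S_{\ell_p^k}$ denotes the unit sphere of $(\mathbb{R}^k,\|\cdot\|_p)$. $[M]^d$ is the set of increasing $d$-tuples from $M$; $m_0=0$. $1_A\in\mathbb{R}^k$ is the indicator vector of $A$ and $1_{(a,b]}=1_{\{i:a<i\le b\}}$. With $P=2\mathbb{N}$ (even integers) and $P^c=\mathbb{N}\setminus P$: $x(\bar m,u,k)=\sum_{s=1}^da_s1_{(m_{s-1},m_s]\cap P}+\sum_{s=1}^db_s1_{(m_{s-1},m_s]\cap P^c}+c1_{(m_d,k]}$. $F$ is step preserving if for all $x$ and $i,j$, $x_i=x_j$ implies $F_i(x)=F_j(x)$. *)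

From HB Require Import structures.
From mathcomp Require Import all_boot all_order all_algebra.
From mathcomp Require Import reals exp.
Set Implicit Arguments. Unset Strict Implicit. Unset Printing Implicit Defensive.
Import Order.TTheory GRing.Theory Num.Theory.
Local Open Scope ring_scope.

Definition linf_norm (R : realType) (n : nat) (v : 'rV[R]_n) : R :=
  \big[Num.max/0]_(i < n) `|v 0 i|.

Definition lr_norm (R : realType) (r : R) (n : nat) (v : 'rV[R]_n) : R :=
  (\sum_(i < n) `|v 0 i| `^ r) `^ (r^-1).

Definition a_const (R : realType) (r eps : R) : nat :=
  `|Num.ceil ((8 / eps + 3) `^ r)|%N.

Definition inM (a m : nat) : Prop := exists j : nat, m = (a ^ j)%N.

(* tuples mbar are functions nat -> nat of which only the indices 1..d
   matter; mz m j is m_j with the convention m_0 = 0. *)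
Definition mz (m : nat -> nat) (j : nat) : nat := if j is 0 then 0%N else m j.

Definition in_Md (a d : nat) (m : nat -> nat) : Prop :=
  (forall s, (1 <= s <= d)%N -> inM a (m s)) /\
  (forall s, (1 <= s < d)%N -> (m s < m s.+1)%N).

(* u = ((a_s)_{s=1}^d, (b_s)_{s=1}^d, c) in R^(2d+1):
   a_s = u (s-1), b_s = u (d+s-1), c = u (2d)  (0-based coordinates).
   x(mbar,u,k) in R^k; coordinate i : 'I_k is the paper's coordinate i+1.
   P = even integers. *)
Definition xvec (R : realType) (d : nat) (m : nat -> nat)
    (u : 'rV[R]_(d + d + 1)) (k : nat) : 'rV[R]_k :=
  \row_(i < k)
    (\sum_(s < d)
        (if (mz m s < i.+1 <= m s.+1)%N && ~~ odd i.+1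
         then u 0 (lshift 1 (lshift d s)) else 0)
   + \sum_(s < d)
        (if (mz m s < i.+1 <= m s.+1)%N && odd i.+1
         then u 0 (lshift 1 (rshift d s)) else 0)
   + (if (mz m d < i.+1 <= k)%N then u 0 (rshift (d + d) (@ord0 0)) else 0)).

Definition step_preserving (R : realType) (k : nat) (F : 'rV[R]_k -> 'rV[R]_k) :=
  forall x : 'rV[R]_k, linf_norm x = 1 ->
    forall i j : 'I_k, x 0 i = x 0 j -> F x 0 i = F x 0 j.

(* Write f = F(x(m)), g = F(x(n)) and let W be the union of the windows
   (n_{s-1}, m_s].  As F is step preserving, |f|^r is constant on each parity
   class of each block (m_{s-1}, m_s] of x(m), and |g|^r likewise for the
   blocks of x(n).  Consecutive points of M differ by a factor a, so W covers
   all but a fraction about 1/a of every parity class of an m-block, and only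
   a fraction about 1/a of every parity class of an n-block.  Since f vanishes
   past m_d, f puts mass at least 1 - 2/a on W while g puts mass at most 2/a
   there, and the reverse Minkowski inequality on the coordinates in W gives
   |f - g|_r >= (1 - 2/a)^(1/r) - (2/a)^(1/r) > 1 - eps by the choice of a. *)

From HB Require Import structures.
From mathcomp Require Import all_boot all_order all_algebra.
From mathcomp Require Import reals exp.
From mathcomp Require Import boolp classical_sets ereal sequences measure.
From mathcomp Require Import lebesgue_stieltjes_measure hoelder.
From mathcomp Require Import zify lra.

Set Implicit Arguments.
Unset Strict Implicit.
Unset Printing Implicit Defensive.

Import Order.TTheory GRing.Theory Num.Theory.

Lemma count_parity_iota p lo len :
  count (fun j => odd j == p) (iota lo len) = (len + (odd lo == p)) %/ 2.
Proof.
elim: len lo => [|len IH] lo /=; first by case: (odd lo == p).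
by rewrite IH /=; case: (odd lo); case: (p) => /=; lia.
Qed.

Lemma card_parity_range k p lo hi : lo <= hi <= k ->
  #|[pred j : 'I_k | (lo <= j < hi) && (odd j == p)]| = (hi - lo + (odd lo == p)) %/ 2.
Proof.
move=> /andP[lohi hik].
rewrite -count_parity_iota -sum1_count -/(index_iota lo hi).
rewrite (big_nat_widenl _ 0) // (big_nat_widen _ _ _ _ _ hik) big_mkord sum1_card.
by apply: eq_card => j; rewrite !inE andbC andbA.
Qed.

Lemma inM_gt0 a x : 0 < a -> inM a x -> 0 < x.
Proof. by move=> a0 [j ->]; rewrite expn_gt0 a0. Qed.

Lemma inM_ltn_leq_mul a x y : 1 < a -> inM a x -> inM a y -> x < y -> a * x <= y.
Proof. by move=> a1 [i ->] [j ->]; rewrite ltn_exp2l // -expnS leq_exp2l. Qed.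

Lemma mz_le q t : mz q t <= q t.
Proof. by case: t. Qed.

Lemma mz_block d q x : x < mz q d -> exists2 s, s < d & mz q s <= x < mz q s.+1.
Proof.
elim: d => [|t IH] // xt.
have [xlt|xge] := ltnP x (mz q t); last by exists t; rewrite ?xge.
by have [s st sx] := IH xlt; exists s; first lia.
Qed.

(* Coordinates with the same parity in the same block of q carry the same value
   of x(q,u,k); the block of i is recorded by the thresholds mz q t above i. *)
Definition step_key (d : nat) (q : nat -> nat) (i : nat) :
    bool * {ffun 'I_d.+1 -> bool} :=
  (odd i, [ffun t : 'I_d.+1 => i < mz q t]).

Lemma step_keyP d q i j :
  reflect (odd i = odd j /\ forall t, t <= d -> (i < mz q t) = (j < mz q t))
          (step_key d q i == step_key d q j).
Proof.
apply: (iffP eqP) => [[] oij eqt | [oij eqt]].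
  split=> // t td.
  have := congr1 (fun f : {ffun _ -> _} => f (Ordinal (td : t < d.+1))) eqt.
  by rewrite !ffunE.
by congr pair => //; apply: eq_ffun => t; rewrite eqt // -ltnS.
Qed.

Lemma step_key_same_block d q s i j : s < d -> mz q s <= i < mz q s.+1 ->
  step_key d q j = step_key d q i -> mz q s <= j < mz q s.+1.
Proof.
move=> sd hi /eqP/step_keyP[_ eqt].
by have := eqt s (ltnW sd); have := eqt s.+1 sd; lia.
Qed.

Local Open Scope ring_scope.

Lemma xvec_step_key (R : realType) d q k (u : 'rV[R]_(d + d + 1)) (i j : 'I_k) :
  step_key d q i = step_key d q j -> xvec q u k 0 i = xvec q u k 0 j.
Proof.
move/eqP/step_keyP => [oij eqt].
have lt_mz t : (t <= d)%N -> (mz q t < i.+1)%N = (mz q t < j.+1)%N.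
  by move=> td; rewrite !ltnS (leqNgt _ i) (leqNgt _ j) eqt.
have lt_next (s : 'I_d) : (i < q s.+1)%N = (j < q s.+1)%N.
  exact: eqt s.+1 (ltn_ord s).
rewrite !mxE !oddS oij !ltn_ord !andbT lt_mz //.
by congr (_ + _ + _); apply: eq_bigr => s _; rewrite lt_mz ?lt_next // ltnW.
Qed.

Section IncreasingTuple.
Variables (a d : nat) (q : nat -> nat).
Hypotheses (a_gt1 : (1 < a)%N) (hq : in_Md a d q).

Lemma mz_ltnS s : (s < d)%N -> (mz q s < mz q s.+1)%N.
Proof.
case: hq => inMq incq; case: s => [|s] sd /=; last by apply: incq; lia.
by apply: (@inM_gt0 a); [lia | apply: inMq; lia].
Qed.

Lemma mz_leq s t : (s <= t <= d)%N -> (mz q s <= mz q t)%N.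
Proof.
elim: t => [|t IH] /andP[st td]; first by have -> : s = 0%N by lia.
have [-> //|ne] := eqVneq s t.+1.
have td' : (t < d)%N by lia.
by apply: (@leq_trans (mz q t)); [apply: IH; lia | exact: ltnW (mz_ltnS td')].
Qed.

Lemma step_key_block s i j : (s < d)%N ->
  (mz q s <= i < mz q s.+1)%N -> (mz q s <= j < mz q s.+1)%N -> odd i = odd j ->
  step_key d q i = step_key d q j.
Proof.
move=> sd hi hj oij; apply/eqP/step_keyP; split=> // t td.
have [ts|st] := leqP t s.
  by have := mz_leq (_ : (t <= s <= d)%N); lia.
by have := mz_leq (_ : (s.+1 <= t <= d)%N); lia.
Qed.

Lemma card_step_fibre k s i lo hi : (s < d)%N -> (mz q s <= i < mz q s.+1)%N ->
  (mz q s <= lo <= hi)%N -> (hi <= mz q s.+1)%N -> (hi <= k)%N ->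
  #|[pred j : 'I_k | (step_key d q j == step_key d q i) && (lo <= j < hi)%N]| =
  ((hi - lo + (odd lo == odd i)) %/ 2)%N.
Proof.
move=> sd blk lohi hi_mz hik; rewrite -(@card_parity_range k); last by lia.
apply: eq_card => j; rewrite !inE.
apply/andP/andP => [[/step_keyP[-> _] //] | [jr /eqP oji]].
by split=> //; apply/eqP; apply: (step_key_block sd) => //; lia.
Qed.

Lemma card_step_fibre_split k s i mid : (s < d)%N -> (mz q s <= i < mz q s.+1)%N ->
  (0 < mid)%N -> (mz q s <= mid)%N -> (a * mid <= mz q s.+1)%N -> (mz q s.+1 <= k)%N ->
  ((a - 2) *
     #|[pred j : 'I_k | (step_key d q j == step_key d q i) && (mz q s <= j < mid)%N]|
   <= 2 *
     #|[pred j : 'I_k | (step_key d q j == step_key d q i) && (mid <= j < mz q s.+1)%N]|)%N.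
Proof.
move=> sd blk mid0 lo_mid a_mid hi_k.
have mid_hi : (mid <= mz q s.+1)%N by apply: leq_trans a_mid; apply: leq_pmull; lia.
rewrite !(card_step_fibre sd blk) ?leqnn ?lo_mid //; last exact: leq_trans mid_hi hi_k.
set x := (_ %/ 2)%N; set y := (_ %/ 2)%N.
have hx : (2 * x <= mid + 1)%N by rewrite /x; lia.
have hy : (mz q s.+1 - mid <= 2 * y + 1)%N by rewrite /y; lia.
have : ((a - 2) * (2 * x) <= a * (mid + 1) - 2 * (mid + 1))%N.
  by rewrite -mulnBl leq_mul2l hx orbT.
have : (a <= a * mid)%N by rewrite leq_pmulr.
lia.
Qed.

Lemma xvec_block (R : realType) k (u : 'rV[R]_(d + d + 1)) (s : 'I_d) (i : 'I_k) :
  (mz q s <= i < mz q s.+1)%N ->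
  xvec q u k 0 i =
  if odd i then u 0 (lshift 1 (lshift d s)) else u 0 (lshift 1 (rshift d s)).
Proof.
move=> /= hi; have sd := ltn_ord s.
have out (s' : 'I_d) : s' != s -> (mz q s' < i.+1 <= q s'.+1)%N = false.
  move=> ne; have s'd := ltn_ord s'; rewrite ltnS.
  case: (ltngtP s' s) => [lt|gt|/val_inj eq]; last by rewrite eq eqxx in ne.
    by have /= := mz_leq (_ : (s'.+1 <= s <= d)%N); lia.
  by have /= := mz_leq (_ : (s.+1 <= s' <= d)%N); lia.
have single (P : bool) (c : 'I_d -> R) :
    \sum_(s' < d) (if (mz q s' < i.+1 <= q s'.+1)%N && P then c s' else 0) =
    if P then c s else 0.
  rewrite (bigD1 s) //= big1 ?addr0 => [|s' ne]; last by rewrite out.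
  by move: hi; rewrite ltnS /= => ->.
have tail : (mz q d < i.+1 <= k)%N = false.
  by have /= := mz_leq (_ : (s.+1 <= d <= d)%N); lia.
by rewrite mxE tail addr0 !single oddS negbK; case: (odd i); rewrite ?addr0 ?add0r.
Qed.

Lemma xvec_tail (R : realType) k (u : 'rV[R]_(d + d + 1)) (i : 'I_k) :
  (mz q d <= i)%N -> xvec q u k 0 i = u 0 (rshift (d + d) ord0).
Proof.
move=> hi; have out (s : 'I_d) : (mz q s < i.+1 <= q s.+1)%N = false.
  by have := ltn_ord s; have /= := mz_leq (_ : (s.+1 <= d <= d)%N); lia.
by rewrite mxE !big1 ?add0r => [|s _|s _]; rewrite ?out // ltnS hi ltn_ord.
Qed.

Lemma xvec_entry (R : realType) k (u : 'rV[R]_(d + d + 1)) (i : 'I_k) :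
  exists j, xvec q u k 0 i = u 0 j.
Proof.
have [/mz_block[s sd hs]|hi] := ltnP i (mz q d); last by rewrite xvec_tail //; eexists.
by rewrite (@xvec_block R k u (Ordinal sd) i hs); case: (odd i); eexists.
Qed.

End IncreasingTuple.

Lemma linf_norm_le (R : realType) p p' (x : 'rV[R]_p) (y : 'rV[R]_p') :
  (forall i, exists j, `|x 0 i| <= `|y 0 j|) -> linf_norm x <= linf_norm y.
Proof.
move=> dom; apply: bigmax_le => [|i _]; first exact: bigmax_ge_id.
by have [j hj] := dom i; exact: bigmax_sup hj.
Qed.

Lemma fibre_sum_le (R : numDomainType) (I K : finType) (key : I -> K) (h : I -> R)
    (X Y : pred I) (c e : R) :
  (forall i j, key i = key j -> h i = h j) -> (forall i, 0 <= h i) -> 0 <= e ->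
  (forall i, X i -> c * #|[pred j | X j && (key j == key i)]|%:R <=
                    e * #|[pred j | Y j && (key j == key i)]|%:R) ->
  c * \sum_(i | X i) h i <= e * \sum_(i | Y i) h i.
Proof.
move=> h_key h_ge0 e_ge0 cmp.
rewrite !(partition_big key predT) // !mulr_sumr; apply: ler_sum => κ _.
have [i0 /andP[Xi0 /eqP <-] | noX] := pickP [pred i | X i && (key i == κ)].
  have const (P : pred I) : \sum_(i | P i && (key i == key i0)) h i =
                            #|[pred j | P j && (key j == key i0)]|%:R * h i0.
    rewrite (eq_bigr (fun=> h i0)) => [|i /andP[_ /eqP/h_key //]].
    by rewrite sumr_const mulr_natl.
  by rewrite !const !mulrA; apply: ler_wpM2r; [exact: h_ge0 | exact: cmp].
rewrite big_pred0 ?mulr0; last exact: noX.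
by rewrite mulr_ge0 // sumr_ge0.
Qed.

Lemma sumr_pred_le (R : numDomainType) (I : finType) (P : pred I) (h : I -> R) :
  (forall i, 0 <= h i) -> \sum_(i | P i) h i <= \sum_i h i.
Proof. by move=> h0; rewrite [X in _ <= X](bigID P) /= lerDl sumr_ge0. Qed.

Lemma minkowski_sum (R : realType) (p : R) n (v w : 'I_n -> R) : 1 <= p ->
  (\sum_i `|v i + w i| `^ p) `^ p^-1 <=
  (\sum_i `|v i| `^ p) `^ p^-1 + (\sum_i `|w i| `^ p) `^ p^-1.
Proof.
move=> p1; have p0 : 0 < p := lt_le_trans ltr01 p1.
pose ext (z : 'I_n -> R) (i : nat) : R := if insub i is Some j then z j else 0.
have LnormE z : Lnorm counting p%:E (EFin \o ext z) = ((\sum_i `|z i| `^ p) `^ p^-1)%:E.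
  rewrite Lnorm_counting // (nneseries_split 0 n) => [|i]; last by rewrite lee_fin powR_ge0.
  rewrite add0n eseries0 ?adde0 => [|i ni _]; last first.
    by rewrite /= /ext insubN -?leqNgt // normr0 powR0 ?gt_eqF.
  rewrite big_mkord -poweR_EFin -sumEFin; congr (_ `^ _)%E; apply: eq_bigr => i _.
  by rewrite /= /ext valK.
have ext_add : ext v \+ ext w = ext (fun i => v i + w i).
  by apply/funext => i; rewrite /ext /=; case: insub => //; rewrite addr0.
have ext_mfun z : measurable_fun setT (ext z) by [].
have := minkowski_EFin counting (ext_mfun v) (ext_mfun w) p1.
by rewrite ext_add !LnormE lee_fin.
Qed.

Lemma lerB_lr_norm_restrict (R : realType) (r : R) n (v w : 'rV[R]_n) (W : pred 'I_n) :
  1 <= r ->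
  (\sum_(i | W i) `|v 0 i| `^ r) `^ r^-1 - (\sum_(i | W i) `|w 0 i| `^ r) `^ r^-1 <=
  lr_norm r (v - w).
Proof.
move=> r1; have r0 : 0 < r := lt_le_trans ltr01 r1.
pose restr (z : 'rV[R]_n) i := if W i then z 0 i else 0.
have sum_restr (z : 'rV[R]_n) : \sum_(i | W i) `|z 0 i| `^ r = \sum_i `|restr z i| `^ r.
  rewrite big_mkcond; apply: eq_bigr => i _; rewrite /restr.
  by case: (W i); rewrite ?normr0 ?powR0 ?gt_eqF.
have restrB_le : (\sum_i `|restr v i - restr w i| `^ r) `^ r^-1 <= lr_norm r (v - w).
  apply: ge0_ler_powR; rewrite ?nnegrE ?invr_ge0 ?(ltW r0) //.
  - by apply: sumr_ge0 => i _; apply: powR_ge0.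
  - by apply: sumr_ge0 => i _; apply: powR_ge0.
  apply: ler_sum => i _; rewrite /restr !mxE.
  by case: (W i); rewrite ?subr0 ?normr0 ?powR0 ?gt_eqF ?powR_ge0.
have := minkowski_sum (fun i => restr v i - restr w i) (restr w) r1.
under eq_bigr do rewrite subrK.
by rewrite !sum_restr lerBlDr => /le_trans; apply; rewrite lerD2r.
Qed.

Lemma lr_norm_eq1 (R : realType) (r : R) n (v : 'rV[R]_n) : 0 < r ->
  lr_norm r v = 1 -> \sum_i `|v 0 i| `^ r = 1.
Proof.
move=> r0; rewrite /lr_norm => v1.
rewrite -[LHS]powRr1; last by apply: sumr_ge0 => i _; apply: powR_ge0.
by rewrite -{1}(mulVf (lt0r_neq0 r0)) powRrM v1 powR1.
Qed.

Lemma a_const_ge (R : realType) (r eps : R) : (8 / eps + 3) `^ r <= (a_const r eps)%:R.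
Proof.
rewrite /a_const natr_absz ger0_norm ?ceil_ge // ceil_ge0 //.
by apply: (lt_le_trans _ (powR_ge0 _ _)); rewrite ltrN10.
Qed.

Lemma a_const_gt3 (R : realType) (r eps : R) : 1 <= r -> 0 < eps -> (3 < a_const r eps)%N.
Proof.
move=> r1 eps0; rewrite -(ltr_nat R); apply: lt_le_trans (a_const_ge r eps).
have K3 : 3 < 8 / eps + 3 by rewrite ltrDr divr_gt0.
by apply: (lt_le_trans K3); apply: le1r_powR r1; lra.
Qed.

Lemma powR_inv_le (R : realType) (r x y : R) : 0 < r -> 0 <= x -> 0 <= y ->
  x <= y `^ r -> x `^ r^-1 <= y.
Proof.
move=> r0 x0 y0 xy.
have := @ge0_ler_powR _ r^-1 _ x (y `^ r).
by rewrite -powRrM mulfV ?gt_eqF // powRr1 // !nnegrE powR_ge0 invr_ge0 (ltW r0); apply.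
Qed.

Lemma root_mass_gap (R : realType) (r eps A al be : R) :
  1 <= r -> 0 < eps -> (8 / eps + 3) `^ r <= A -> 0 <= al <= 1 -> 0 <= be ->
  (A - 2) * (1 - al) <= 2 * al -> (A - 2) * be <= 2 * (1 - be) ->
  1 - eps < al `^ r^-1 - be `^ r^-1.
Proof.
move=> r1 eps0 Kr_A /andP[al0 al1] be0 alA beA.
have r0 : 0 < r := lt_le_trans ltr01 r1.
set K := 8 / eps + 3 in Kr_A.
have Keps : (K - 3) * eps = 8 by rewrite /K addrK divfK ?gt_eqF.
have K3 : 3 < K by rewrite /K ltrDr divr_gt0.
have K_A : K <= A by apply: le_trans (le1r_powR _ r1) Kr_A; lra.
have al_close : (1 - al) * 8 <= 2 * eps.
  have : (1 - al) * K <= 2 by nra.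
  nra.
have al_root : al <= al `^ r^-1.
  have [->|al_pos] := eqVneq al 0; first by rewrite powR_ge0.
  by apply: ger1_powR; [rewrite lt_neqAle eq_sym al_pos al0 | rewrite invf_le1].
have be_root : be `^ r^-1 * K <= 2.
  have : (be * K `^ r) `^ r^-1 <= 2.
    apply: powR_inv_le; rewrite ?mulr_ge0 ?powR_ge0 //.
    apply: (le_trans (ler_wpM2l be0 Kr_A)); apply: (le_trans _ (le1r_powR _ r1)); lra.
  rewrite powRM ?powR_ge0 // -powRrM mulfV ?gt_eqF // powRr1 //; lra.
have be_small : be `^ r^-1 * 8 <= 2 * eps.
  have := powR_ge0 be r^-1; nra.
lra.
Qed.

(* The paper's set of coordinates lying in some (n_{s-1}, m_s], shifted to
   0-based coordinates. *)
Definition window (d : nat) (m n : nat -> nat) (j : nat) : bool :=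
  [exists s : 'I_d, (mz n s <= j < mz m s.+1)%N].

Section Interlaced.
Variables (a d k : nat) (m n : nat -> nat).
Hypotheses (a_gt3 : (3 < a)%N) (hm : in_Md a d m) (hn : in_Md a d n)
  (lt_mn : forall s, (1 <= s <= d)%N -> (m s < n s)%N)
  (lt_nm : forall s, (1 <= s < d)%N -> (n s < m s.+1)%N)
  (lt_nk : (n d < k)%N).

Let a_gt1 : (1 < a)%N. Proof. by lia. Qed.

Lemma mz_gap_nm s : (0 < s < d)%N -> (a * mz n s <= mz m s.+1)%N.
Proof.
case: s => [//|s] sd /=; apply: inM_ltn_leq_mul => //; last exact: lt_nm.
- by apply: hn.1; lia.
- by apply: hm.1; lia.
Qed.

Lemma mz_gap_mn s : (s < d)%N -> (a * mz m s.+1 <= mz n s.+1)%N.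
Proof.
move=> sd /=; apply: inM_ltn_leq_mul => //; last by apply: lt_mn; lia.
- by apply: hm.1; lia.
- by apply: hn.1; lia.
Qed.

Lemma mz_m_gt0 s : (0 < s <= d)%N -> (0 < mz m s)%N.
Proof. by case: s => [//|s] sd; apply: (@inM_gt0 a); [lia | apply: hm.1]. Qed.

Lemma mz_ltn_nm s : (s < d)%N -> (mz n s < mz m s.+1)%N.
Proof. by case: s => [|s] sd; [apply: mz_m_gt0 | apply: lt_nm]; lia. Qed.

Lemma mz_n_ltk s : (s <= d)%N -> (mz n s < k)%N.
Proof.
by move=> sd; have := mz_leq a_gt1 hn (_ : (s <= d <= d)%N); have := mz_le n d; lia.
Qed.

Lemma mz_m_ltk s : (s <= d)%N -> (mz m s < k)%N.
Proof.
case: s => [|s] sd /=; first by case: (k) lt_nk.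
by have /= := mz_n_ltk sd; have := lt_mn (_ : (1 <= s.+1 <= d)%N); lia.
Qed.

Lemma window_nblock s j : (s < d)%N -> (mz n s <= j < mz n s.+1)%N ->
  window d m n j -> (j < mz m s.+1)%N.
Proof.
move=> sd hj /existsP[s' /andP[ns'j jms']]; have s'd := ltn_ord s'.
have [s's|ss'] := leqP s' s.
  by have := mz_leq a_gt1 hm (_ : (s'.+1 <= s.+1 <= d)%N); lia.
by have := mz_leq a_gt1 hn (_ : (s.+1 <= s' <= d)%N); lia.
Qed.

Lemma card_fibre_off_window (i : 'I_k) : (i < mz m d)%N -> ~~ window d m n i ->
  ((a - 2) * #|[pred j : 'I_k | ((j < mz m d) && ~~ window d m n j) &&
                               (step_key d m j == step_key d m i)]|
   <= 2 * #|[pred j : 'I_k | window d m n j && (step_key d m j == step_key d m i)]|)%N.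
Proof.
move=> iA iW; have [s sd blk] := mz_block iA.
have in_window j : (mz n s <= j < mz m s.+1)%N -> window d m n j.
  by move=> hj; apply/existsP; exists (Ordinal sd).
have i_lt_n : (i < mz n s)%N.
  rewrite ltnNge; apply: contra iW => ni.
  by apply: in_window; case/andP: blk => _ ->; rewrite ni.
have gap : (a * mz n s <= mz m s.+1)%N.
  by apply: mz_gap_nm; rewrite sd andbT; case: (s) i_lt_n.
have n_pos : (0 < mz n s)%N by lia.
have m_le_n : (mz m s <= mz n s)%N by lia.
have split := card_step_fibre_split a_gt1 hm sd blk n_pos m_le_n gap (ltnW (mz_m_ltk sd)).
apply: leq_trans (leq_trans (leq_mul (leqnn _) (subset_leq_card _)) split)
                 (leq_mul (leqnn _) (subset_leq_card _)).
- apply/fintype.subsetP => j; rewrite !inE => /andP[/andP[_ jW] /eqP kj].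
  have jblk := step_key_same_block sd blk kj.
  rewrite kj eqxx /=; suff : ~~ (mz n s <= j)%N by lia.
  by apply: contra jW => nj; apply: in_window; case/andP: jblk => _ ->; rewrite nj.
- by apply/fintype.subsetP => j; rewrite !inE => /andP[-> /in_window ->].
Qed.

Lemma card_fibre_window (i : 'I_k) : window d m n i ->
  ((a - 2) * #|[pred j : 'I_k | window d m n j && (step_key d n j == step_key d n i)]|
   <= 2 * #|[pred j : 'I_k | ~~ window d m n j && (step_key d n j == step_key d n i)]|)%N.
Proof.
case/existsP=> s /andP[nsi ims]; have sd := ltn_ord s.
have gap := mz_gap_mn sd.
have m_le_am : (mz m s.+1 <= a * mz m s.+1)%N by rewrite leq_pmull // ltnW.
have blk : (mz n s <= i < mz n s.+1)%N by lia.
have m_pos : (0 < mz m s.+1)%N by lia.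
have n_le_m : (mz n s <= mz m s.+1)%N by lia.
have split := card_step_fibre_split a_gt1 hn sd blk m_pos n_le_m gap (ltnW (mz_n_ltk sd)).
apply: leq_trans (leq_trans (leq_mul (leqnn _) (subset_leq_card _)) split)
                 (leq_mul (leqnn _) (subset_leq_card _)).
- apply/fintype.subsetP => j; rewrite !inE => /andP[jW /eqP kj].
  have jblk := step_key_same_block sd blk kj.
  by rewrite kj eqxx /= (window_nblock sd jblk jW) andbT; case/andP: jblk.
- apply/fintype.subsetP => j; rewrite !inE => /andP[kj jr]; rewrite kj andbT.
  have jblk : (mz n s <= j < mz n s.+1)%N by lia.
  by apply/negP => /(window_nblock sd jblk); lia.
Qed.

Lemma xvec_interlaced_value (R : realType) (u : 'rV[R]_(d + d + 1)) (i : 'I_k) :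
  exists j : 'I_k, xvec n u k 0 j = xvec m u k 0 i.
Proof.
have [/mz_block[s sd blk] | tail] := ltnP i (mz m d); last first.
  have k1 : (k.-1 < k)%N by lia.
  exists (Ordinal k1); rewrite !(xvec_tail a_gt1) //=.
  by have := mz_le n d; lia.
pose j := (mz m s.+1 + (odd (mz m s.+1) != odd i))%N.
have gap := mz_gap_mn sd; have nm := mz_ltn_nm sd; have nk := mz_n_ltk sd.
have m_pos : (0 < mz m s.+1)%N by apply: mz_m_gt0.
have m4 : (4 * mz m s.+1 <= a * mz m s.+1)%N by rewrite leq_mul2r a_gt3 orbT.
have jk : (j < k)%N by rewrite /j; lia.
have jblk : (mz n s <= j < mz n s.+1)%N by rewrite /j; lia.
have odd_j : odd j = odd i by rewrite /j oddD oddb; case: (odd i); case: (odd _).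
exists (Ordinal jk).
rewrite (@xvec_block _ _ _ a_gt1 hn _ _ u (Ordinal sd) (Ordinal jk) jblk).
by rewrite (@xvec_block _ _ _ a_gt1 hm _ _ u (Ordinal sd) i blk) /= odd_j.
Qed.

Lemma xvec_interlaced_sphere (R : realType) (u : 'rV[R]_(d + d + 1)) :
  linf_norm u = 1 -> linf_norm (xvec m u k) = 1 -> linf_norm (xvec n u k) = 1.
Proof.
move=> u1 xm1; apply/le_anti/andP; split.
  rewrite -u1; apply: linf_norm_le => i.
  by have [j ->] := xvec_entry a_gt1 hn u i; exists j.
rewrite -{1}xm1; apply: linf_norm_le => i.
by have [j <-] := xvec_interlaced_value u i; exists j.
Qed.

Lemma window_mass_ge (R : realType) (h : 'I_k -> R) :
  (forall i j : 'I_k, step_key d m i = step_key d m j -> h i = h j) ->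
  (forall i, 0 <= h i) -> (forall i : 'I_k, (mz m d <= i)%N -> h i = 0) ->
  \sum_i h i = 1 ->
  (a%:R - 2) * (1 - \sum_(i : 'I_k | window d m n i) h i) <=
  2 * \sum_(i : 'I_k | window d m n i) h i.
Proof.
move=> h_key h_ge0 h_tail h1.
have -> : 1 - \sum_(i : 'I_k | window d m n i) h i =
          \sum_(i : 'I_k | (i < mz m d)%N && ~~ window d m n i) h i.
  rewrite -h1 (bigID (fun i : 'I_k => window d m n i) predT) /= addrAC subrr add0r.
  rewrite (bigID (fun i : 'I_k => i < mz m d)%N) /= [X in _ + X]big1 ?addr0 => [|i /andP[_]].
    by apply: eq_bigl => i; rewrite andbC.
  by rewrite -leqNgt => /h_tail.
rewrite -natrB; last by lia.
apply: fibre_sum_le => // [i j|i /andP[iA iW]]; first exact: h_key.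
by rewrite -!natrM ler_nat card_fibre_off_window.
Qed.

Lemma window_mass_le (R : realType) (h : 'I_k -> R) :
  (forall i j : 'I_k, step_key d n i = step_key d n j -> h i = h j) ->
  (forall i, 0 <= h i) -> \sum_i h i = 1 ->
  (a%:R - 2) * \sum_(i : 'I_k | window d m n i) h i <=
  2 * (1 - \sum_(i : 'I_k | window d m n i) h i).
Proof.
move=> h_key h_ge0 h1.
have -> : 1 - \sum_(i : 'I_k | window d m n i) h i =
          \sum_(i : 'I_k | ~~ window d m n i) h i.
  by rewrite -h1 (bigID (fun i : 'I_k => window d m n i) predT) /= addrAC subrr add0r.
rewrite -natrB; last by lia.
apply: fibre_sum_le => // [i j|i iW]; first exact: h_key.
by rewrite -!natrM ler_nat card_fibre_window.
Qed.

End Interlaced.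

Theorem proposition3p5 (R : realType) (r : R) (d : nat) (eps : R)
    (m n : nat -> nat) (k : nat) (u : 'rV[R]_(d + d + 1))
    (F : 'rV[R]_k -> 'rV[R]_k) :
  1 <= r -> 0 < eps ->
  in_Md (a_const r eps) d m -> in_Md (a_const r eps) d n ->
  (forall s, (1 <= s <= d)%N -> (m s < n s)%N) ->
  (forall s, (1 <= s < d)%N -> (n s < m s.+1)%N) ->
  (n d < k)%N ->
  linf_norm u = 1 ->
  (forall x : 'rV[R]_k, linf_norm x = 1 -> lr_norm r (F x) = 1) ->
  step_preserving F ->
  (* well-definedness of F(x(mbar,u,k)): the point lies in S_{l_inf^k} *)
  linf_norm (xvec m u k) = 1 ->
  (forall i : 'I_k, (mz m d < i.+1)%N -> F (xvec m u k) 0 i = 0) ->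
  lr_norm r (F (xvec m u k) - F (xvec n u k)) > 1 - eps.
Proof.
move=> r1 eps0 hm hn lt_mn lt_nm lt_nk u1 F_sphere F_step xm1 Fm_tail.
have r0 : 0 < r := lt_le_trans ltr01 r1.
have a_gt3 := a_const_gt3 r1 eps0.
have xn1 := xvec_interlaced_sphere a_gt3 hm hn lt_mn lt_nm lt_nk u1 xm1.
pose h q (i : 'I_k) := `|F (xvec q u k) 0 i| `^ r.
have h_ge0 q i : 0 <= h q i := powR_ge0 _ _.
have h_key q : linf_norm (xvec q u k) = 1 ->
    forall i j : 'I_k, step_key d q i = step_key d q j -> h q i = h q j.
  by move=> xq1 i j /(xvec_step_key u) /(F_step _ xq1) Fij; rewrite /h Fij.
have h_mass q : linf_norm (xvec q u k) = 1 -> \sum_i h q i = 1.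
  by move=> xq1; apply: lr_norm_eq1 r0 (F_sphere _ xq1).
apply: lt_le_trans (lerB_lr_norm_restrict _ _ (fun i : 'I_k => window d m n i) r1).
apply: (root_mass_gap r1 eps0 (a_const_ge r eps)).
- by rewrite sumr_ge0 //= -(h_mass m xm1) sumr_pred_le.
- exact: sumr_ge0.
- apply: (window_mass_ge a_gt3 hm hn lt_mn lt_nm lt_nk (h_key m xm1) (h_ge0 m) _
                         (h_mass m xm1)).
  by move=> i iA; rewrite /h Fm_tail ?normr0 ?powR0 ?gt_eqF.
- exact: (window_mass_le a_gt3 hm hn lt_mn lt_nk (h_key n xn1) (h_ge0 n) (h_mass n xn1)).
Qed.
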